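(* Let $k\ge 4$ and $n\ge 11k$. Then for every ordered $k$-tuple $S=(v_1,\dots,v_k)\in V(Q_n)^k$ of vertices of $Q_n$ (repetitions allowed), there exists an $S$-subdivided closed walk in $Q_n$.
   Context: $Q_n$ is the $n$-dimensional discrete binary cube: vertex set $\{0,1\}^n$, two vectors adjacent iff they differ in exactly one coordinate. For a graph $G$ and $S=(v_1,\dots,v_k)\in V(G)^k$ (repetitions permitted), with indices taken modulo $k$, an $S$-subdivided closed walk is a sequence $W=(v_1,P_1,v_2,P_2,\dots,v_k,P_k,v_1)$ such that each $P_i$ is a $v_i$–$v_{i+1}$ path in $G$, no two of the paths $P_i,P_j$ ($i\ne j$) share an internal vertex, $P_i$ is trivial if $v_i=v_{i+1}$, and $P_i$ has length at least $2$ if $v_i\ne v_{i+1}$. *)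

From mathcomp Require Import all_boot.
Set Implicit Arguments. Unset Strict Implicit. Unset Printing Implicit Defensive.

Definition cube_vertex (n : nat) := {ffun 'I_n -> bool}.

Definition cube_adj (n : nat) : rel (cube_vertex n) :=
  fun x y => #|[set i : 'I_n | x i != y i]| == 1.

(* A (graph) path in the graph (V, e) from a to b, given as its full vertex
   sequence p = [:: a; ...; b]: consecutive vertices adjacent, all distinct.
   Its length (number of edges) is (size p).-1. *)
Definition is_path (V : finType) (e : rel V) (a b : V) (p : seq V) : Prop :=
  [/\ p != [::], head a p = a, last a p = b, path e a (behead p) & uniq p].

Definition internal (V : eqType) (p : seq V) : seq V := drop 1 (take (size p).-1 p).

Definition subdivided_closed_walk (V : finType) (e : rel V) (k : nat)
    (S : 'I_k -> V) (P : 'I_k -> seq V) : Prop :=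
  [/\ forall i, is_path e (S i) (S (ordS i)) (P i),
      forall i j, i != j -> forall x, x \in internal (P i) -> x \notin internal (P j),
      forall i, S i = S (ordS i) -> P i = [:: S i]
    & forall i, S i != S (ordS i) -> 2 <= (size (P i)).-1].

From mathcomp Require Import all_boot zify.
Set Implicit Arguments. Unset Strict Implicit. Unset Printing Implicit Defensive.

(* For each consecutive pair (a, b) = (v_i, v_(i+1)) with a != b we use a
   family of a-b paths indexed by a coordinate c.  If a and b agree on at
   least 2k-1 coordinates, the path for an agreeing c flips c, then all
   differing coordinates in a fixed order, then c back: its internal vertices
   differ from a, among the agreeing coordinates, exactly at c.  Otherwise a
   and b differ on more than 9k coordinates; split them into halves lo and hi
   with an injection c |-> c' from lo into hi, and let the path for
   c in lo flip c, then hi without c', then lo without c, then c': each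
   internal vertex differs from a on lo exactly at c, or from b on hi exactly
   at c'.  The internal vertices of any other path lie on a walk flipping
   each coordinate at most once, and along such a walk at most two
   coordinates ever occur as such a sole difference.  So a fixed path for
   another pair meets at most 2 (resp. 4) paths of the family of (a, b),
   which has more than 2(k-1) (resp. 4(k-1)) members, and the paths can be
   chosen greedily, one pair at a time. *)

Lemma card_has_le (T : finType) (I : eqType) (A : {set T}) (P : T -> I -> bool) s m :
    (forall j, j \in s -> #|[set c in A | P c j]| <= m) ->
  #|[set c in A | has (P c) s]| <= m * size s.
Proof.
elim: s => [|j s IHs] le_m.
  by rewrite muln0 leqn0 cards_eq0; apply/eqP/setP => c; rewrite !inE andbF.
have -> : [set c in A | has (P c) (j :: s)] =
          [set c in A | P c j] :|: [set c in A | has (P c) s].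
  by apply/setP => c; rewrite !inE /= andb_orr.
rewrite mulnS cardsU; apply: leq_trans (leq_subr _ _) _.
rewrite leq_add ?le_m ?mem_head // IHs // => j' j's.
by apply: le_m; rewrite inE j's orbT.
Qed.

Lemma greedy_choice (I T : finType) (cand : I -> {set T})
    (conf : I -> T -> I -> T -> bool) (bound : I -> nat) :
    (forall i c j d, conf i c j d = conf j d i c) ->
    (forall i j d, i != j -> d \in cand j -> #|[set c in cand i | conf i c j d]| <= bound i) ->
    (forall i, bound i * #|I|.-1 < #|cand i|) ->
  exists2 ch : I -> T, forall i, ch i \in cand i &
    forall i j, i != j -> ~~ conf i (ch i) j (ch j).
Proof.
move=> conf_sym conf_le cand_big.
suff [ch ch_cand ch_free] : exists2 ch : I -> T, forall i, ch i \in cand i &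
    {in enum I &, forall i j, i != j -> ~~ conf i (ch i) j (ch j)}.
  by exists ch => // i j; apply: ch_free; rewrite mem_enum.
elim: (enum I) (enum_uniq I) => [_|i s IHs /= /andP[iNs us]].
  have /fin_all_exists[ch ch_cand] : forall i, exists c, c \in cand i.
    by move=> i; apply/set0Pn; rewrite -card_gt0 (leq_ltn_trans _ (cand_big i)).
  by exists ch.
have [ch ch_cand ch_free] := IHs us.
set B := [set c in cand i | has (fun j => conf i c j (ch j)) s].
have card_B : #|B| < #|cand i|.
  apply: leq_ltn_trans (cand_big i); apply: leq_trans (card_has_le _) _.
    by move=> j js; apply: conf_le (ch_cand j); apply: contraNneq iNs => ->.
  have := max_card (mem (i :: s)); rewrite (card_uniqP _) /= ?iNs // => size_s.
  by rewrite leq_mul2l -ltnS (ltn_predK size_s) size_s orbT.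
have /subsetPn[c ci cNB] : ~~ (cand i \subset B).
  by apply: contraTN card_B => /subset_leq_card; rewrite leqNgt.
have free_i j : j \in s -> ~~ conf i c j (ch j).
  by move=> js; apply: contra cNB => cf; rewrite inE ci; apply/hasP; exists j.
have chE j : j \in s -> (if j == i then c else ch j) = ch j.
  by move=> js; case: eqP js => // ->; rewrite (negbTE iNs).
exists (fun j => if j == i then c else ch j) => [j|j j'].
  by case: eqP => [->|_]; rewrite ?ci ?ch_cand.
rewrite !in_cons => /orP[/eqP->|js] /orP[/eqP->|j's]; rewrite ?eqxx // ?chE //.
- by move=> _; apply: free_i.
- by move=> _; rewrite conf_sym; apply: free_i.
- exact: ch_free.
Qed.

Section Walks.
Variable n : nat.
Local Notation V := (cube_vertex n).

Definition flips (a : V) (s : seq 'I_n) : V := [ffun j => a j (+) odd (count_mem j s)].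

Definition diff (x y : V) : {set 'I_n} := [set i | x i != y i].

Lemma flipsE a s j : flips a s j = a j (+) odd (count_mem j s).
Proof. by rewrite ffunE. Qed.

Lemma flips_uniqE a s j : uniq s -> flips a s j = a j (+) (j \in s).
Proof. by move=> us; rewrite flipsE count_uniq_mem //; case: (j \in s). Qed.

Lemma flips0 a : flips a [::] = a.
Proof. by apply/ffunP => j; rewrite flipsE addbF. Qed.

Lemma flips_cat a s1 s2 : flips a (s1 ++ s2) = flips (flips a s1) s2.
Proof. by apply/ffunP => j; rewrite !flipsE count_cat oddD addbA. Qed.

Lemma flips_perm a s1 s2 : perm_eq s1 s2 -> flips a s1 = flips a s2.
Proof. by move=> /permP eq_s; apply/ffunP => j; rewrite !flipsE eq_s. Qed.

Lemma cube_adj_flips1 a c : cube_adj a (flips a [:: c]).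
Proof.
rewrite /cube_adj (_ : [set i | _] = [set c]) ?cards1 //.
apply/setP => i; rewrite !inE flipsE /= addn0 (eq_sym i c).
by case: (c == i); case: (a i).
Qed.

Fixpoint walk (a : V) (s : seq 'I_n) : seq V :=
  if s is c :: s' then a :: walk (flips a [:: c]) s' else [:: a].

Lemma size_walk a s : size (walk a s) = (size s).+1.
Proof. by elim: s a => [|c s IHs] a //=; rewrite IHs. Qed.

Lemma last_walk x a s : last x (walk a s) = flips a s.
Proof.
elim: s x a => [|c s IHs] x a /=; first by rewrite flips0.
by rewrite IHs -flips_cat.
Qed.

Lemma walk_path a s : path (@cube_adj n) a (behead (walk a s)).
Proof.
elim: s a => [|c s IHs] a //=.
by case: s IHs => [|c' s] IHs /=; rewrite cube_adj_flips1 // IHs.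
Qed.

Lemma mem_walk_flips a s x :
  x \in walk a s -> exists2 t, t <= size s & x = flips a (take t s).
Proof.
elim: s a => [|c s IHs] a /=; rewrite inE.
  by move=> /eqP ->; exists 0; rewrite ?flips0.
case/orP=> [/eqP ->|/IHs[t le_ts ->]]; first by exists 0; rewrite ?flips0.
by exists t.+1; rewrite //= -flips_cat.
Qed.

Lemma walk_uniq a s : uniq s -> uniq (walk a s).
Proof.
elim: s a => [|c s IHs] a //= /andP[cNs us].
rewrite IHs // andbT; apply/negP => /mem_walk_flips[t _ /ffunP/(_ c)].
have cNt : c \notin take t s by apply: contraNN cNs; apply: mem_take.
by rewrite -flips_cat flips_uniqE /= ?cNt ?take_uniq // mem_head; case: (a c).
Qed.

Lemma walk_rcons a s e : walk a (rcons s e) = rcons (walk a s) (flips a (rcons s e)).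
Proof. by elim: s a => [|c s IHs] a //=; rewrite IHs -flips_cat. Qed.

Lemma internal_walk a c s e : internal (walk a (c :: rcons s e)) = walk (flips a [:: c]) s.
Proof.
rewrite /internal /= walk_rcons size_rcons size_walk /= -cats1.
by rewrite take_size_cat ?size_walk // drop0.
Qed.

Lemma is_path_walk a s : uniq (walk a s) -> is_path (@cube_adj n) a (flips a s) (walk a s).
Proof. by case: s => [|c s] us; split; rewrite ?last_walk ?walk_path. Qed.

Lemma diff_flips a s s' : uniq s -> uniq s' ->
  diff (flips a s) (flips a s') = [set i | (i \in s) != (i \in s')].
Proof.
move=> us us'; apply/setP => i; rewrite !inE !flips_uniqE //.
by case: (a i); case: (i \in s); case: (i \in s').
Qed.

Definition sole_diffs (W : seq V) (z : V) (R : {set 'I_n}) : {set 'I_n} :=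
  [set y | has (fun x => diff x z :&: R == [set y]) W].

Lemma sole_diffsP W z R y :
  reflect (exists2 x, x \in W & diff x z :&: R = [set y]) (y \in sole_diffs W z R).
Proof. by rewrite inE; apply: (iffP hasP) => -[x xW /eqP]; exists x. Qed.

Lemma mem_sole_diffs_walk w z M R y : uniq M -> y \in sole_diffs (walk w M) z R ->
  y \in R /\ exists2 t, t <= size M &
    forall y0, y0 \in R -> (w y0 != z y0) (+) (index y0 M < t) = (y0 == y).
Proof.
move=> uM /sole_diffsP[_ /mem_walk_flips[t le_tM ->] /setP sole].
have := sole y; rewrite !inE eqxx => /andP[_ Ry]; split=> //; exists t => // y0 Ry0.
have := sole y0; rewrite !inE Ry0 andbT flips_uniqE ?take_uniq // in_take_leq //.
by move=> <-; case: (w y0); case: (z y0); case: (_ < _).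
Qed.

Lemma card_sole_diffs_walk w z M R : uniq M -> #|sole_diffs (walk w M) z R| <= 2.
Proof.
move=> uM; set Y := sole_diffs _ _ _.
have status_inj : {in Y &, forall y y', (w y != z y) = (w y' != z y') -> y = y'}.
  move=> y y' /(mem_sole_diffs_walk uM)[Ry [t _ sole]].
  move=> /(mem_sole_diffs_walk uM)[Ry' [t' _ sole']] same; case: (eqVneq y y') => // neq.
  (* Exactly one of y, y' is flipped by time t, and exactly the other one by
     time t'; but flipping times are thresholds [index _ M < _]. *)
  move: (sole y Ry) (sole y' Ry') (sole' y Ry) (sole' y' Ry').
  rewrite !eqxx (negbTE neq) (eq_sym y') (negbTE neq) -same.
  by case: (w y != z y) => /=; lia.
rewrite -(cardsID [set y | w y != z y] Y) -[2]/(1 + 1) leq_add //.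
  apply/card_le1_eqP => y y' /setIP[Yy]; rewrite inE => sy /setIP[Yy'].
  by rewrite inE => sy'; apply: status_inj; rewrite // sy sy'.
apply/card_le1_eqP => y y' /setDP[Yy]; rewrite inE => /negbTE sy /setDP[Yy'].
by rewrite inE => /negbTE sy'; apply: status_inj; rewrite // sy sy'.
Qed.

End Walks.

Section Route.
Variables (n k : nat) (a b : cube_vertex n).

Definition diff_seq := enum (diff a b).
Definition lo := take (size diff_seq)./2 diff_seq.
Definition hi := drop (size diff_seq)./2 diff_seq.
Definition partner (c : 'I_n) := nth c hi (index c lo).
Definition detour_ok := 2 * k.-1 < #|~: diff a b|.
Definition middle c := if detour_ok then diff_seq else rem (partner c) hi ++ rem c lo.
Definition final_flip (c : 'I_n) := if detour_ok then c else partner c.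
Definition route c :=
  if a == b then [:: a] else walk a (c :: rcons (middle c) (final_flip c)).
Definition choices : {set 'I_n} :=
  if a == b then setT else if detour_ok then ~: diff a b else [set c in lo].
Definition conflict_bound := if a == b then 0 else if detour_ok then 2 else 4.

Lemma uniq_diff_seq : uniq diff_seq. Proof. exact: enum_uniq. Qed.

Lemma mem_diff_seq i : (i \in diff_seq) = (a i != b i).
Proof. by rewrite mem_enum inE. Qed.

Lemma flips_diff_seq : flips a diff_seq = b.
Proof.
apply/ffunP => j; rewrite flips_uniqE ?uniq_diff_seq // mem_diff_seq.
by case: (a j); case: (b j).
Qed.

Lemma uniq_lo : uniq lo. Proof. exact/take_uniq/uniq_diff_seq. Qed.
Lemma uniq_hi : uniq hi. Proof. exact/drop_uniq/uniq_diff_seq. Qed.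

Lemma mem_lo_hi c : c \in lo -> c \notin hi.
Proof.
have := uniq_diff_seq; rewrite -(cat_take_drop (size diff_seq)./2 diff_seq) cat_uniq.
by case/and3P=> _ /hasPn dis _; apply: contraL => /dis.
Qed.

Lemma mem_hi_diff_seq c : c \in hi -> c \in diff_seq. Proof. exact: mem_drop. Qed.

Lemma size_lo_hi : size lo <= size hi.
Proof. rewrite size_take size_drop -divn2; case: ifP; lia. Qed.

Lemma partner_hi c : c \in lo -> partner c \in hi.
Proof. by move=> clo; apply: mem_nth; rewrite (leq_trans _ size_lo_hi) ?index_mem. Qed.

Lemma partner_inj : {in lo &, injective partner}.
Proof.
move=> c c' clo c'lo; rewrite /partner (set_nth_default c' c); last first.
  by rewrite (leq_trans _ size_lo_hi) ?index_mem.
move/eqP; rewrite nth_uniq ?uniq_hi ?(leq_trans _ size_lo_hi) ?index_mem //.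
by move/eqP/index_inj; apply.
Qed.

Lemma perm_crossover c : c \in lo ->
  perm_eq (c :: rcons (rem (partner c) hi ++ rem c lo) (partner c)) diff_seq.
Proof.
move=> clo; rewrite -(cat_take_drop (size diff_seq)./2 diff_seq) -/lo -/hi.
apply: (@perm_trans _ ((c :: rem c lo) ++ partner c :: rem (partner c) hi)).
  by rewrite cat_cons perm_cons perm_rcons perm_sym perm_catC.
by rewrite perm_sym perm_cat // perm_to_rem ?partner_hi.
Qed.

Lemma uniq_middle c : uniq (middle c).
Proof.
rewrite /middle; case: ifP => _; first exact: uniq_diff_seq.
rewrite cat_uniq !rem_uniq ?uniq_lo ?uniq_hi //= andbT.
by apply/hasPn => y /mem_rem ylo; apply: contra (mem_lo_hi ylo); apply: mem_rem.
Qed.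

Lemma detour_sole_diff c x : c \notin diff a b ->
  x \in walk (flips a [:: c]) diff_seq -> diff x a :&: ~: diff a b = [set c].
Proof.
move=> cD /mem_walk_flips[t _ ->]; rewrite -flips_cat -[a in diff _ a]flips0.
rewrite diff_flips //=; last first.
  rewrite take_uniq ?uniq_diff_seq // andbT.
  by apply: contra cD => /mem_take; rewrite mem_diff_seq inE.
apply/setP => y; rewrite !inE in_nil eqbF_neg negbK.
case: eqVneq => [->|_] /=; first by move: cD; rewrite inE.
by apply/andP => -[/mem_take]; rewrite mem_diff_seq => ->.
Qed.

Lemma crossover_sole_diff c x : c \in lo ->
  x \in walk (flips a [:: c]) (rem (partner c) hi ++ rem c lo) ->
  diff x a :&: [set y in lo] = [set c] \/ diff x b :&: [set y in hi] = [set partner c].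
Proof.
move=> clo; have := perm_uniq (perm_crossover clo); rewrite uniq_diff_seq.
set p := partner c; set H := rem p hi; set L := rem c lo.
rewrite /= rcons_uniq mem_rcons inE negb_or => /andP[/andP[_ cNM] /andP[_ uM]].
move=> /mem_walk_flips[t _ ->]; rewrite -flips_cat /=.
have uniq_take : uniq (c :: take t (H ++ L)).
  by apply: (@take_uniq _ (c :: H ++ L) t.+1); rewrite /= cNM.
have yNc y : y \in hi -> (y == c) = false.
  by move=> yhi; apply/eqP => yc; move: (mem_lo_hi clo); rewrite -yc yhi.
case: (leqP t (size H)) => [le_tH|lt_Ht].
  left; rewrite takel_cat // in uniq_take *.
  rewrite -[a in diff _ a]flips0 diff_flips //; apply/setP => y.
  rewrite !inE in_nil eqbF_neg negbK; case: eqVneq => [->|_] /=; first by rewrite clo.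
  by apply/andP => -[/mem_take/mem_rem yhi /mem_lo_hi]; rewrite yhi.
right; rewrite take_cat ltnNge (ltnW lt_Ht) /= in uniq_take *.
rewrite -[b in diff _ b]flips_diff_seq diff_flips ?uniq_diff_seq //; apply/setP => y.
rewrite !inE; case: (boolP (y \in hi)) => [yhi|yNhi]; last first.
  by rewrite andbF; apply/esym; apply: contraNF yNhi => /eqP ->; apply: partner_hi.
have yNL : y \notin take (t - size H) L.
  by apply: contraL yhi => /mem_take/mem_rem; apply: mem_lo_hi.
rewrite andbT yNc // mem_cat (negbTE yNL) orbF (mem_rem_uniq _ uniq_hi) inE yhi andbT.
by rewrite (mem_hi_diff_seq yhi); case: (y == p).
Qed.

Lemma route_trivial c : a = b -> route c = [:: a].
Proof. by move=> ab; rewrite /route ab eqxx. Qed.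

Lemma route_long c : a != b -> 2 <= (size (route c)).-1.
Proof. by move=> ab; rewrite /route (negbTE ab) size_walk /= size_rcons. Qed.

Lemma internal_route_sub c :
  {subset internal (route c) <= walk (flips a [:: c]) (middle c)}.
Proof. by rewrite /route; case: ifP => _ //; rewrite internal_walk. Qed.

Lemma flips_detour c : flips a (c :: rcons diff_seq c) = b.
Proof.
rewrite -flips_diff_seq; apply/ffunP => j; rewrite !flipsE /= -cats1 count_cat /=.
by rewrite addn0 addnCA addnn oddD odd_double addbF.
Qed.

Lemma uniq_detour c :
  a != b -> c \notin diff a b -> uniq (walk a (c :: rcons diff_seq c)).
Proof.
move=> ab cD; rewrite /= walk_rcons -flips_cat.
have Nc x : x \in walk (flips a [:: c]) diff_seq -> x c != a c.
  move=> /(detour_sole_diff cD)/setP/(_ c); rewrite !inE eqxx.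
  by move: cD; rewrite inE => -> /andP[].
rewrite flips_detour rcons_uniq walk_uniq ?uniq_diff_seq // andbT.
rewrite mem_rcons inE negb_or ab /=.
have acbc : a c = b c by move: cD; rewrite inE negbK => /eqP.
by apply/andP; split; apply/negP => /Nc; rewrite -?acbc eqxx.
Qed.

Lemma route_is_path c : c \in choices -> is_path (@cube_adj n) a b (route c).
Proof.
rewrite /route /choices /middle /final_flip; case: (eqVneq a b) => [<- _|ab] //.
case: ifP => _ cc.
  rewrite -(flips_detour c); apply/is_path_walk/uniq_detour => //.
  by rewrite inE in cc.
have ps := perm_crossover (_ : c \in lo); rewrite inE in cc.
rewrite -flips_diff_seq -(flips_perm a (ps cc)); apply/is_path_walk/walk_uniq.
by rewrite (perm_uniq (ps cc)) uniq_diff_seq.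
Qed.

Lemma card_meeting_choices (W : seq (cube_vertex n)) w M :
  uniq M -> {subset W <= walk w M} ->
  #|[set c in choices | has [in W] (internal (route c))]| <= conflict_bound.
Proof.
move=> uM WM; set X := [set c in _ | _].
have Xmeet c : c \in X ->
    c \in choices /\ exists2 x, x \in walk w M & x \in walk (flips a [:: c]) (middle c).
  rewrite inE => /andP[cc /hasP[x xi xW]]; split=> //.
  by exists x; [apply: WM | apply: internal_route_sub].
rewrite /conflict_bound; case: (eqVneq a b) => [ab|ab].
  rewrite leqn0 cards_eq0; apply/eqP/setP => c.
  by rewrite !inE route_trivial // andbF.
case: ifP => detour.
  apply: leq_trans (card_sole_diffs_walk w a (~: diff a b) uM).
  apply/subset_leq_card/subsetP => c /Xmeet[].
  rewrite /choices /middle (negbTE ab) detour inE => cD [x xW xc].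
  by apply/sole_diffsP; exists x => //; apply: detour_sole_diff; rewrite // inE.
set Y1 := sole_diffs (walk w M) a [set y in lo].
set Y2 := sole_diffs (walk w M) b [set y in hi].
set C := [set c in lo | partner c \in Y2].
have sub : X \subset Y1 :|: C.
  apply/subsetP => c /Xmeet[]; rewrite /choices /middle (negbTE ab) detour inE.
  move=> clo [x xW /(crossover_sole_diff clo)[sole|sole]]; apply/setUP.
    by left; apply/sole_diffsP; exists x.
  by right; apply/setIdP; split=> //; apply/sole_diffsP; exists x.
have card_C : #|C| <= #|Y2|.
  rewrite -(card_in_imset (f := partner)); last first.
    by move=> c c' /setIdP[clo _] /setIdP[c'lo _]; apply: partner_inj.
  by apply/subset_leq_card/subsetP => _ /imsetP[c /setIdP[_ pY] ->].
apply: leq_trans (subset_leq_card sub) _; rewrite cardsU.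
apply: leq_trans (leq_subr _ _) _; rewrite -[4]/(2 + 2) leq_add //.
  exact: card_sole_diffs_walk.
exact: leq_trans card_C (card_sole_diffs_walk _ _ _ uM).
Qed.

Lemma conflict_bound_lt : 4 <= k -> 11 * k <= n -> conflict_bound * k.-1 < #|choices|.
Proof.
move=> k4 kn; rewrite /conflict_bound /choices; case: eqP => _.
  by rewrite cardsT card_ord; lia.
case: ifP => [//|]; rewrite /detour_ok => /negbT; rewrite -leqNgt => few_agree.
have card_D : #|diff a b| + #|~: diff a b| = n by rewrite cardsC card_ord.
rewrite cardsE; move/card_uniqP: uniq_lo => ->.
rewrite size_take /diff_seq -cardE -divn2; case: ifP; lia.
Qed.

End Route.

Theorem lemma3p9 (k n : nat) : 4 <= k -> 11 * k <= n ->
  forall S : 'I_k -> cube_vertex n,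
  exists P : 'I_k -> seq (cube_vertex n),
    subdivided_closed_walk (@cube_adj n) S P.
Proof.
move=> k4 kn S; pose P i := route k (S i) (S (ordS i)).
have many_choices i :
    conflict_bound k (S i) (S (ordS i)) * #|'I_k|.-1 < #|choices k (S i) (S (ordS i))|.
  by rewrite card_ord; apply: conflict_bound_lt.
have [ch ch_choice ch_disjoint] := greedy_choice
  (conf := fun i c j d => has [in internal (P j d)] (internal (P i c)))
  (fun i c j d => has_sym _ _)
  (fun i j d _ _ => card_meeting_choices _ _ _ (uniq_middle _ _ _ _)
                                          (@internal_route_sub _ _ _ _ _))
  many_choices.
exists (fun i => P i (ch i)); split=> [i|i j ij x xi|i|i].
- exact: route_is_path.
- by apply: (hasPn (ch_disjoint i j ij)).
- exact: route_trivial.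
- exact: route_long.
Qed.
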